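(* Suppose the gain matrix $V$ is irreducible. Then the max-min SIR-balancing problem $\max_{p\in\mathcal P}\min_{k\in\mathcal K}\mathrm{SIR}_k(p)/\gamma_k$ has a unique maximizer $\bar p$, and $\bar p=\bar p'$, where $\bar p'=(\frac{1}{t'}I-\Gamma V)^{-1}\Gamma z$ and $t'$ is the largest $t>0$ for which there exists $p\in\mathcal P$ with $(\frac1t I-\Gamma V)p=\Gamma z$. In particular $\bar p>0$.
   Context: Network model: $K\ge 2$ links, $\mathcal K=\{1,\dots,K\}$. Power constraint set $\mathcal P=\{p\in\mathbb R_+^K: Cp\le\hat p\}$, where $C\in\{0,1\}^{N\times K}$ has at least one entry equal to $1$ in each column and $\hat p=(P_1,\dots,P_N)\in\mathbb R_{++}^N$. Gain matrix $V\in\mathbb R_+^{K\times K}$ with zero diagonal, noise vector $z\in\mathbb R_{++}^K$, $\mathrm{SIR}_k(p)=p_k/((Vp)_k+z_k)$. SIR targets $\gamma_1,\dots,\gamma_K>0$ and $\Gamma=\mathrm{diag}(\gamma_1,\dots,\gamma_K)$. *)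

From HB Require Import structures.
From mathcomp Require Import all_boot all_order all_algebra.
Set Implicit Arguments. Unset Strict Implicit. Unset Printing Implicit Defensive.
Import Order.TTheory GRing.Theory Num.Theory.
Local Open Scope ring_scope.

(* The neutral element
   used for the big operator is the maximum of 0 and all values, which is an
   upper bound of every f i, hence does not affect the result when n >= 1. *)
Definition minval (R : realFieldType) (n : nat) (f : 'I_n -> R) : R :=
  \big[Num.min/ \big[Num.max/0]_(i < n) f i]_(i < n) f i.

(* Irreducibility of a square matrix: there is no nonempty proper index set T
   such that V k l = 0 for all k in T and l not in T (equivalently, V cannot
   be brought to block upper-triangular form by a simultaneous permutation of
   rows and columns). *)
Definition irreducible_mx (R : realFieldType) (K : nat) (V : 'M[R]_K) : Prop :=
  ~ exists T : {set 'I_K},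
      [/\ T != set0, T != setT &
          forall k l, k \in T -> l \notin T -> V k l = 0].

Definition powset (R : realFieldType) (N K : nat) (C : 'M[R]_(N, K))
  (phat : 'cV[R]_N) (p : 'cV[R]_K) : Prop :=
  (forall k, 0 <= p k 0) /\ (forall n, (C *m p) n 0 <= phat n 0).

Definition SIR (R : realFieldType) (K : nat) (V : 'M[R]_K) (z : 'cV[R]_K)
  (p : 'cV[R]_K) (k : 'I_K) : R :=
  p k 0 / ((V *m p) k 0 + z k 0).

Definition balance_obj (R : realFieldType) (K : nat) (V : 'M[R]_K)
  (z : 'cV[R]_K) (gamma : 'I_K -> R) (p : 'cV[R]_K) : R :=
  minval (fun k => SIR V z p k / gamma k).

Definition Gammamx (R : realFieldType) (K : nat) (gamma : 'I_K -> R) : 'M[R]_K :=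
  diag_mx (\row_k gamma k).

Definition Amx (R : realFieldType) (K : nat) (V : 'M[R]_K)
  (gamma : 'I_K -> R) (t : R) : 'M[R]_K :=
  t^-1%:M - Gammamx gamma *m V.

From HB Require Import structures.
From mathcomp Require Import all_boot all_order all_algebra polyrcf.
From Stdlib Require Import Classical.
Import Order.TTheory GRing.Theory Num.Theory.
Set Implicit Arguments. Unset Strict Implicit. Unset Printing Implicit Defensive.
Local Open Scope ring_scope.

(* Write M = Gamma V (nonnegative, irreducible) and w = Gamma z > 0.  Then
   min_k SIR_k(p)/gamma_k >= c > 0 iff (1/c I - M) p >= w, so everything is
   governed by the set of feasible levels s, those for which (sI - M) p = w
   has a solution p in the power set P; the theorem's t' is 1 / min of it.

   - M-matrix facts: if (sI - M) x > 0 for some x > 0, then sI - M is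
     invertible and inverse-positive; hence a supersolution in P makes its
     level feasible, and solutions at feasible levels are positive.
   - The feasible levels have a least element.  Over a real closed field this
     is an algebraic argument: by Cramer's rule the conditions "p(u) in P" are
     sign conditions on polynomials in u, all dividing one nonzero polynomial
     crit.  Feasibility extends downwards across root-free intervals (the
     solutions stay bounded in P, so the matrix stays invertible at the
     endpoint); hence below each feasible level lies a feasible root of crit,
     and there are finitely many of them.
   - At the least level s with solution pbar all SIR ratios equal 1/s, every
     power vector has objective <= 1/s, and a maximizer q is a supersolution
     at level s.  By irreducibility q - pbar is zero or positive, and in the
     second case pbar has slack in every power constraint, so scaling it up
     would make a smaller level feasible. *)

Section RealClosedFacts.
Variable R : rcfType.
Implicit Types (G : {poly R}) (r s u : R).

Lemma roots_in_seq G : G != 0 -> exists l : seq R, forall x, root G x -> x \in l.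
Proof.
by move=> G0; exists (rootsR G) => x Gx; rewrite -(roots_on_rootsR G0) Gx andbT.
Qed.

Lemma rootfree_nonneg G r s u :
  (forall x, r < x <= s -> ~~ root G x) -> 0 <= G.[s] ->
  r <= u <= s -> 0 <= G.[u].
Proof.
move=> noroot Gs /andP[ru us]; rewrite leNgt; apply/negP => Gu.
have [x /andP[ux xs] Gx] := poly_ivt us (introT andP (conj (ltW Gu) Gs)).
have ux' : u < x.
  by rewrite lt_neqAle ux andbT; apply: contraTneq Gx => <-; rewrite rootE lt_eqF.
by move: (noroot x); rewrite (le_lt_trans ru ux') xs Gx => /(_ isT).
Qed.

Lemma rootfree_nonpos G r s u :
  (forall x, r < x <= s -> ~~ root G x) -> G.[s] <= 0 ->
  r <= u <= s -> G.[u] <= 0.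
Proof.
move=> noroot Gs ru; rewrite -oppr_ge0 -hornerN.
apply: (rootfree_nonneg (r := r) (s := s)) => // [x /noroot|].
  by rewrite rootN.
by rewrite hornerN oppr_ge0.
Qed.

End RealClosedFacts.

Section ExtremaInSeq.
Variable R : realDomainType.
Implicit Types (A : R -> Prop) (l : seq R).

Lemma ex_max_in_seq A l :
  (forall x, A x -> x \in l) -> (exists x, A x) ->
  exists x, A x /\ forall y, A y -> y <= x.
Proof.
elim: l A => [|a l IH] A Al [x0 Ax0]; first by move: (Al _ Ax0).
have [[x1 Ax1]|onlya] := classic (exists x, A x /\ x <> a); last first.
  have Aa : A a.
    by apply: NNPP => nAa; apply: onlya; exists x0; split=> // e; rewrite e in Ax0.
  exists a; split=> // y Ay; have [->//|ya] := classic (y = a).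
  by case: onlya; exists y.
have Al' x : A x /\ x <> a -> x \in l.
  by case=> /Al; rewrite inE => /orP[/eqP|].
have [m [[Am _] maxm]] := IH _ Al' (ex_intro _ x1 Ax1).
have maxm' y : A y -> y = a \/ y <= m.
  by move=> Ay; have [->|ya] := classic (y = a); [left | right; apply: maxm].
have [Aa|nAa] := classic (A a); last first.
  by exists m; split=> // y Ay; case: (maxm' y Ay) => // ya; rewrite ya in Ay.
exists (Num.max a m); split; first by case: leP.
by move=> y /maxm'[->|ym]; rewrite le_max ?lexx ?ym ?orbT.
Qed.

Lemma ex_min_in_seq A l :
  (forall x, A x -> x \in l) -> (exists x, A x) ->
  exists x, A x /\ forall y, A y -> x <= y.
Proof.
move=> Al [x0 Ax0].
have [||m [Am maxm]] := @ex_max_in_seq (fun x => A (- x)) (map -%R l).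
- by move=> x /Al lx; apply/mapP; exists (- x); rewrite ?opprK.
- by exists (- x0); rewrite opprK.
by exists (- m); split=> // y Ay; rewrite lerNl maxm ?opprK.
Qed.

End ExtremaInSeq.

Lemma ex_pos_lower_bound (R : realFieldType) (I : finType) (f : I -> R) :
  (forall i, 0 < f i) -> exists2 d, 0 < d & forall i, d <= f i.
Proof.
move=> f_gt0; exists (\big[Order.min/1]_i f i).
  by elim/big_ind: _ => // x y x0 y0; rewrite lt_min x0 y0.
by move=> i; apply: ge_bigmin_seq => //; exact: mem_index_enum.
Qed.

Section NonnegativeSystems.
Variables (R : realFieldType) (K : nat) (M : 'M[R]_K).
Hypothesis M_ge0 : forall i j, 0 <= M i j.
Implicit Types (s : R) (x y : 'cV[R]_K).

Lemma scalar_sub_mulmxE s x k :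
  ((s%:M - M) *m x) k 0 = s * x k 0 - \sum_j M k j * x j 0.
Proof. by rewrite mulmxBl mul_scalar_mx !mxE. Qed.

(* Monotonicity of M-matrices: if (sI - M) x > 0 for some x > 0, then
   (sI - M) y >= 0 forces y >= 0.  At the index minimizing y_k / x_k the
   row inequality for y contradicts the one for x unless that ratio is
   nonnegative. *)
Lemma Mmatrix_monotone s x y :
  (forall k, 0 < x k 0) -> (forall k, 0 < ((s%:M - M) *m x) k 0) ->
  (forall k, 0 <= ((s%:M - M) *m y) k 0) -> forall k, 0 <= y k 0.
Proof.
move=> x_gt0 Ax_gt0 Ay_ge0 k; rewrite leNgt; apply/negP => yk_lt0.
pose ratio i := y i 0 / x i 0.
have [k0 _ ratio_min] := arg_minP ratio (isT : predT k).
set m := ratio k0 in ratio_min.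
have m_lt0 : m < 0.
  by apply: le_lt_trans (ratio_min k isT) _; rewrite ltr_pdivrMr // mul0r.
have y_ge j : m * x j 0 <= y j 0 by rewrite -ler_pdivlMr //; apply: ratio_min.
have yk0 : y k0 0 = m * x k0 0 by rewrite /m /ratio divfK // gt_eqF.
have My_ge : m * (\sum_j M k0 j * x j 0) <= \sum_j M k0 j * y j 0.
  by rewrite mulr_sumr; apply: ler_sum => j _; rewrite mulrCA ler_wpM2l.
have := Ay_ge0 k0; have := Ax_gt0 k0.
rewrite !scalar_sub_mulmxE !subr_gt0 subr_ge0 yk0 mulrCA => Ax Ay.
have := le_trans My_ge Ay; rewrite leNgt => /negP; apply.
by rewrite ltr_nM2l.
Qed.

(* Under the same hypothesis sI - M is invertible: its kernel is both
   nonnegative and nonpositive. *)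
Lemma Mmatrix_unit s x :
  (forall k, 0 < x k 0) -> (forall k, 0 < ((s%:M - M) *m x) k 0) ->
  (s%:M - M) \in unitmx.
Proof.
move=> x_gt0 Ax_gt0; rewrite unitmxE unitfE -det_tr.
apply/negP => /det0P[v v_neq0 vA0]; move/eqP: v_neq0; apply.
have Av0 : (s%:M - M) *m v^T = 0 by rewrite -[LHS]trmxK trmx_mul trmxK vA0 trmx0.
have v_ge0 := Mmatrix_monotone x_gt0 Ax_gt0 (y := v^T).
have v_le0 := Mmatrix_monotone x_gt0 Ax_gt0 (y := - v^T).
apply/matrixP => i j; rewrite (ord1 i) mxE; apply/le_anti.
have vj_ge0 : 0 <= v^T j 0 by apply: v_ge0 => k; rewrite Av0 mxE.
have vj_le0 : 0 <= (- v^T) j 0 by apply: v_le0 => k; rewrite mulmxN Av0 oppr0 mxE.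
by move: vj_ge0 vj_le0; rewrite !mxE oppr_ge0 => -> ->.
Qed.

(* For an irreducible M, a nonnegative y with (sI - M) y >= 0 is either zero
   or entrywise positive: its zero set T has no edge leaving it, since
   the k-th row inequality for k in T gives M k l * y l = 0. *)
Lemma irreducible_zero_or_pos s y :
  irreducible_mx M -> (forall k, 0 <= y k 0) ->
  (forall k, 0 <= ((s%:M - M) *m y) k 0) ->
  y = 0 \/ forall k, 0 < y k 0.
Proof.
move=> Mirr y_ge0 Ay_ge0.
have [/forallP y_gt0|/forallPn[k0 yk0]] := boolP [forall k, 0 < y k 0].
  by right.
have [->|y_neq0] := eqVneq y 0; [by left | exfalso; apply: Mirr].
exists [set k | y k 0 == 0]; split.
- by apply/set0Pn; exists k0; rewrite inE eq_le y_ge0 leNgt yk0.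
- apply: contraNneq y_neq0 => Tfull; apply/eqP/matrixP => i j.
  have : i \in [set k | y k 0 == 0] by rewrite Tfull inE.
  by rewrite (ord1 j) inE mxE => /eqP.
- move=> k l; rewrite !inE => /eqP yk /negPf yl.
  have := Ay_ge0 k; rewrite scalar_sub_mulmxE yk mulr0 sub0r oppr_ge0 => sum_le0.
  have terms_ge0 j : true -> 0 <= M k j * y j 0 by move=> _; apply: mulr_ge0.
  have sum0 : \sum_j M k j * y j 0 = 0 by apply/le_anti; rewrite sum_le0 sumr_ge0.
  move/eqP: (psumr_eq0P terms_ge0 sum0 (i := l) isT).
  by rewrite mulf_eq0 yl orbF => /eqP.
Qed.

End NonnegativeSystems.

Section FeasibleLevels.
Variables (R : realFieldType) (N K : nat) (C : 'M[R]_(N, K)) (phat : 'cV[R]_N).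
Variables (M : 'M[R]_K) (w : 'cV[R]_K).
Hypotheses (M_ge0 : forall i j, 0 <= M i j) (w_gt0 : forall k, 0 < w k 0).
Hypotheses (C_ge0 : forall n k, 0 <= C n k) (phat_gt0 : forall n, 0 < phat n 0).
Implicit Types (s : R) (p q : 'cV[R]_K).

Definition feasible s := exists2 p, powset C phat p & (s%:M - M) *m p = w.

Lemma supersolution_pos s p :
  (forall k, 0 <= p k 0) -> (forall k, w k 0 <= ((s%:M - M) *m p) k 0) ->
  forall k, 0 < s /\ 0 < p k 0.
Proof.
move=> p_ge0 Ap_ge k.
have spk_gt0 : 0 < s * p k 0.
  have := lt_le_trans (w_gt0 k) (Ap_ge k).
  rewrite scalar_sub_mulmxE subr_gt0; apply: le_lt_trans.
  by apply: sumr_ge0 => j _; apply: mulr_ge0.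
have pk_gt0 : 0 < p k 0.
  by rewrite lt_def p_ge0 andbT; apply: contraTneq spk_gt0 => ->; rewrite mulr0 ltxx.
by split=> //; rewrite -(pmulr_lgt0 _ pk_gt0).
Qed.

Lemma feasible_solution s p :
  powset C phat p -> (s%:M - M) *m p = w ->
  [/\ forall k, 0 < p k 0, (s%:M - M) \in unitmx & p = invmx (s%:M - M) *m w].
Proof.
move=> [p_ge0 _] Ap; have Ap_ge k : w k 0 <= ((s%:M - M) *m p) k 0 by rewrite Ap.
have p_gt0 k : 0 < p k 0 by case: (supersolution_pos p_ge0 Ap_ge k).
have A_unit : (s%:M - M) \in unitmx.
  by apply: (Mmatrix_unit M_ge0 p_gt0) => k; rewrite Ap.
by split=> //; rewrite -Ap mulKmx.
Qed.

Lemma feasible_gt0 (k0 : 'I_K) s : feasible s -> 0 < s.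
Proof.
case=> p [p_ge0 _] Ap; have Ap_ge k : w k 0 <= ((s%:M - M) *m p) k 0 by rewrite Ap.
by case: (supersolution_pos p_ge0 Ap_ge k0).
Qed.

(* A supersolution in P makes its level feasible: the exact solution lies
   between 0 and the supersolution, hence also in P. *)
Lemma feasible_of_supersolution s p :
  powset C phat p -> (forall k, w k 0 <= ((s%:M - M) *m p) k 0) -> feasible s.
Proof.
move=> [p_ge0 Cp_le] Ap_ge.
have p_gt0 k : 0 < p k 0 by case: (supersolution_pos p_ge0 Ap_ge k).
have Ap_gt0 k : 0 < ((s%:M - M) *m p) k 0 := lt_le_trans (w_gt0 k) (Ap_ge k).
have A_unit := Mmatrix_unit M_ge0 p_gt0 Ap_gt0.
pose p' := invmx (s%:M - M) *m w.
have Ap' : (s%:M - M) *m p' = w by rewrite mulKVmx.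
have p'_ge0 := Mmatrix_monotone M_ge0 p_gt0 Ap_gt0 (y := p').
have p'_le k : p' k 0 <= p k 0.
  rewrite -subr_ge0 (_ : _ - _ = (p - p') k 0); last by rewrite !mxE.
  apply: (Mmatrix_monotone M_ge0 p_gt0 Ap_gt0) => j.
  by have := Ap_ge j; rewrite mulmxBr Ap' !mxE subr_ge0.
exists p' => //; split=> [k|n]; first by apply: p'_ge0 => j; rewrite Ap' ltW.
apply: le_trans (Cp_le n); rewrite !mxE; apply: ler_sum => j _.
exact: ler_wpM2l.
Qed.

(* Some level is feasible: take a small uniform power vector, which lies in
   P, and a large level for which it is a supersolution. *)
Lemma feasible_exists : exists s, feasible s.
Proof.
have [d d_gt0 d_le] := ex_pos_lower_bound (f := fun n => phat n 0) phat_gt0.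
pose B := \sum_n \sum_k C n k + 1.
have B_gt0 : 0 < B by rewrite ltr_wpDl // sumr_ge0 // => n _; rewrite sumr_ge0.
pose x := d / B; have x_gt0 : 0 < x by rewrite divr_gt0.
pose p : 'cV[R]_K := const_mx x.
have pP : powset C phat p.
  split=> [k|n]; first by rewrite mxE ltW.
  apply: le_trans (d_le n); rewrite mxE.
  under eq_bigr do rewrite mxE.
  rewrite -mulr_suml /x mulrA ler_pdivrMr // mulrC ler_pM2l // /B (bigD1 n) //=.
  rewrite -addrA lerDl addr_ge0 //.
  by apply: sumr_ge0 => i _; apply: sumr_ge0.
pose T k := \sum_j M k j * x + w k 0.
have T_ge0 k : 0 <= T k.
  apply: addr_ge0; last exact: ltW.
  by apply: sumr_ge0 => j _; exact: mulr_ge0 (M_ge0 _ _) (ltW x_gt0).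
exists ((\sum_k T k) / x); apply: (feasible_of_supersolution pP) => k.
rewrite scalar_sub_mulmxE mxE divfK ?gt_eqF //.
under [X in _ <= _ - X]eq_bigr do rewrite mxE.
rewrite lerBrDr addrC -/(T k) (bigD1 k) //= lerDl.
by apply: sumr_ge0 => j _.
Qed.

Lemma powset_bounded p k :
  (exists n, C n k = 1) -> powset C phat p -> p k 0 <= \sum_n phat n 0.
Proof.
move=> [n Cnk] [p_ge0 Cp_le]; apply: le_trans (_ : phat n 0 <= _); last first.
  by rewrite (bigD1 n) //= lerDl sumr_ge0 // => i _; rewrite ltW.
apply: le_trans (Cp_le n); rewrite mxE (bigD1 k) //= Cnk mul1r lerDl.
by apply: sumr_ge0 => j _; apply: mulr_ge0.
Qed.

(* A vector strictly below a point of P satisfies every power constraint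
   strictly: a row of C is either zero or has a positive entry. *)
Lemma strict_slack p q :
  (forall k, p k 0 < q k 0) -> powset C phat q ->
  forall n, (C *m p) n 0 < phat n 0.
Proof.
move=> pq [_ Cq_le] n.
have [/existsP[k Cnk]|/existsPn C0] := boolP [exists k, 0 < C n k].
  apply: lt_le_trans (Cq_le n); rewrite !mxE (bigD1 k) //= [X in _ < X](bigD1 k) //=.
  by rewrite ltr_leD ?ltr_pM2l // ler_sum // => j _; rewrite ler_wpM2l // ltW.
rewrite mxE big1 ?phat_gt0 // => j _.
suff -> : C n j = 0 by rewrite mul0r.
by apply/le_anti; rewrite C_ge0 andbT leNgt C0.
Qed.

(* If a positive solution at level s leaves slack in every power constraint,
   scaling it up by 1 + eta stays in P and is a supersolution at a
   smaller level. *)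
Lemma feasible_below_of_slack s p :
  (s%:M - M) *m p = w -> (forall k, 0 < p k 0) ->
  (forall n, (C *m p) n 0 < phat n 0) -> exists2 s', s' < s & feasible s'.
Proof.
move=> Ap p_gt0 slack.
have slack_gt0 n : 0 < (phat n 0 - (C *m p) n 0) / phat n 0.
  by rewrite divr_gt0 // subr_gt0.
have [eta eta_gt0 eta_le] := ex_pos_lower_bound slack_gt0.
have ratio_gt0 k : 0 < w k 0 / p k 0 by rewrite divr_gt0.
have [th th_gt0 th_le] := ex_pos_lower_bound ratio_gt0.
pose lam := 1 + eta; have lam_gt0 : 0 < lam by rewrite addr_gt0.
exists (s - th * eta / lam); first by rewrite gtrDl oppr_lt0 !mulr_gt0 ?invr_gt0.
apply: (@feasible_of_supersolution _ (lam *: p)).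
  split=> [k|n]; first by rewrite mxE mulr_ge0 ?ltW.
  have Cp_ge0 : 0 <= (C *m p) n 0.
    rewrite mxE; apply: sumr_ge0 => j _; exact: mulr_ge0 (C_ge0 _ _) (ltW (p_gt0 _)).
  have slack_n : eta * phat n 0 <= phat n 0 - (C *m p) n 0 by rewrite -ler_pdivlMr.
  rewrite -scalemxAr [(lam *: (C *m p)) n 0]mxE /lam mulrDl mul1r addrC -lerBrDr.
  by rewrite (le_trans _ slack_n) // ler_pM2l // ltW.
move=> k; have Apk : s * p k 0 - \sum_j M k j * p j 0 = w k 0.
  by rewrite -scalar_sub_mulmxE Ap.
rewrite -scalemxAr mxE scalar_sub_mulmxE mulrBl addrAC Apk mulrBr.
have -> : lam * (th * eta / lam * p k 0) = eta * (th * p k 0).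
  by rewrite [LHS]mulrC -!mulrA [p k 0 * lam]mulrC mulKf ?gt_eqF // mulrCA.
rewrite /lam mulrDl mul1r -addrA lerDl subr_ge0 ler_wpM2l ?(ltW eta_gt0) //.
by rewrite -ler_pdivlMr.
Qed.

(* At the least feasible level s, with solution p, any supersolution q in P
   equals p when M is irreducible: q - p >= 0 is zero or positive, and
   positivity would leave slack in P contradicting the minimality of s. *)
Lemma least_level_supersolution s p q :
  irreducible_mx M -> (forall s', feasible s' -> s <= s') ->
  (s%:M - M) *m p = w -> powset C phat p -> powset C phat q ->
  (forall k, w k 0 <= ((s%:M - M) *m q) k 0) -> q = p.
Proof.
move=> Mirr s_min Ap [p_ge0 _] qP Aq_ge.
have Ap_ge k : w k 0 <= ((s%:M - M) *m p) k 0 by rewrite Ap.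
have p_gt0 k : 0 < p k 0 by case: (supersolution_pos p_ge0 Ap_ge k).
have Ap_gt0 k : 0 < ((s%:M - M) *m p) k 0 by rewrite Ap.
have Ay_ge0 k : 0 <= ((s%:M - M) *m (q - p)) k 0.
  by have := Aq_ge k; rewrite mulmxBr Ap !mxE subr_ge0.
have y_ge0 := Mmatrix_monotone M_ge0 p_gt0 Ap_gt0 Ay_ge0.
have [/eqP|y_gt0] := irreducible_zero_or_pos M_ge0 Mirr y_ge0 Ay_ge0.
  by rewrite subr_eq0 => /eqP.
have pq k : p k 0 < q k 0 by have := y_gt0 k; rewrite !mxE subr_gt0.
have [s' s's /s_min] := feasible_below_of_slack Ap p_gt0 (strict_slack pq qP).
by rewrite leNgt s's.
Qed.

End FeasibleLevels.

Section CramerNumerators.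
Variables (R : comNzRingType) (N K : nat) (C : 'M[R]_(N, K)) (phat : 'cV[R]_N).
Variables (M : 'M[R]_K) (w : 'cV[R]_K).

(* By Cramer's rule the solution of (uI - M) p = w is sol_num(u) / chi(u),
   chi the characteristic polynomial of M; sol_num is polynomial in u. *)
Definition sol_num : 'cV[{poly R}]_K := \adj (char_poly_mx M) *m map_mx polyC w.

(* Numerator of the n-th power constraint:
   (C p(u))_n - phat_n = con_num n (u) / chi(u). *)
Definition con_num (n : 'I_N) : {poly R} :=
  (map_mx polyC C *m sol_num) n 0 - (phat n 0)%:P * char_poly M.

Lemma horner_char_poly_mx u : map_mx (horner_eval u) (char_poly_mx M) = u%:M - M.
Proof.
apply/matrixP => i j; rewrite !mxE /horner_eval.
by rewrite hornerD hornerN hornerMn hornerX hornerC.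
Qed.

Lemma horner_char_poly u : (char_poly M).[u] = \det (u%:M - M).
Proof. by rewrite -horner_evalE -det_map_mx horner_char_poly_mx. Qed.

Lemma horner_polyC_mx m n (A : 'M[R]_(m, n)) u :
  map_mx (horner_eval u) (map_mx polyC A) = A.
Proof. by apply/matrixP => i j; rewrite !mxE /horner_eval hornerC. Qed.

Lemma horner_sol_num u k : (sol_num k 0).[u] = (\adj (u%:M - M) *m w) k 0.
Proof.
have E : map_mx (horner_eval u) sol_num = \adj (u%:M - M) *m w.
  by rewrite map_mxM map_mx_adj horner_char_poly_mx horner_polyC_mx.
by rewrite -E [RHS]mxE.
Qed.

Lemma horner_con_num u n :
  (con_num n).[u] = (C *m (\adj (u%:M - M) *m w)) n 0 - phat n 0 * \det (u%:M - M).
Proof.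
rewrite /con_num hornerD hornerN hornerM hornerC horner_char_poly; congr (_ - _).
have E : map_mx (horner_eval u) (map_mx polyC C *m sol_num) =
    C *m (\adj (u%:M - M) *m w).
  by rewrite !map_mxM map_mx_adj horner_char_poly_mx !horner_polyC_mx.
by rewrite -E [in RHS]mxE.
Qed.

End CramerNumerators.

Lemma ge0_div_mul (F : realFieldType) (a d : F) :
  d != 0 -> (0 <= a / d) = (0 <= a * d).
Proof.
move=> d0; have -> : a / d = a * d * d^-1 ^+ 2 by rewrite expr2 mulrA mulfK.
by rewrite pmulr_lge0 // lt_def sqr_ge0 expf_neq0 ?invr_eq0.
Qed.

Section SignCertificates.
Variables (R : realFieldType) (N K : nat) (C : 'M[R]_(N, K)) (phat : 'cV[R]_N).
Variables (M : 'M[R]_K) (w : 'cV[R]_K).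
Hypotheses (M_ge0 : forall i j, 0 <= M i j) (w_gt0 : forall k, 0 < w k 0).

(* Polynomial sign conditions which, where chi(u) != 0, say exactly that the
   Cramer solution at level u lies in P. *)
Definition sign_certificate (u : R) : Prop :=
  (forall k, 0 <= (sol_num M w k 0 * char_poly M).[u]) /\
  (forall n, (con_num C phat M w n * char_poly M).[u] <= 0).

Lemma powset_cramerE u : (char_poly M).[u] != 0 ->
  powset C phat (invmx (u%:M - M) *m w) <-> sign_certificate u.
Proof.
rewrite horner_char_poly => det_neq0.
have A_unit : u%:M - M \in unitmx by rewrite unitmxE unitfE.
set d := \det (u%:M - M).
have -> : invmx (u%:M - M) *m w = d^-1 *: (\adj (u%:M - M) *m w).
  by rewrite /invmx A_unit scalemxAl.
have sol_ge0 k : (0 <= (d^-1 *: (\adj (u%:M - M) *m w)) k 0) =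
    (0 <= (sol_num M w k 0 * char_poly M).[u]).
  by rewrite mxE mulrC ge0_div_mul // hornerM horner_sol_num horner_char_poly.
have con_le0 n : ((C *m (d^-1 *: (\adj (u%:M - M) *m w))) n 0 <= phat n 0) =
    ((con_num C phat M w n * char_poly M).[u] <= 0).
  rewrite -scalemxAr mxE -subr_ge0; set c := (C *m _) n 0.
  have -> : phat n 0 - d^-1 * c = (phat n 0 * d - c) / d by rewrite mulrBl mulfK // mulrC.
  rewrite ge0_div_mul // hornerM horner_con_num horner_char_poly -/d -/c.
  by rewrite -oppr_le0 -mulNr opprB.
split=> [[p_ge0 Cp_le]|[sol_ge con_le]]; split=> [k|n].
- by rewrite -sol_ge0.
- by rewrite -con_le0.
- by rewrite sol_ge0.
- by rewrite con_le0.
Qed.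

Lemma feasible_of_certificate u :
  (char_poly M).[u] != 0 -> sign_certificate u -> feasible C phat M w u.
Proof.
move=> chi_u /(powset_cramerE chi_u) pP; exists (invmx (u%:M - M) *m w) => //.
by rewrite mulKVmx // unitmxE unitfE -horner_char_poly.
Qed.

Lemma certificate_of_feasible s :
  feasible C phat M w s -> (char_poly M).[s] != 0 /\ sign_certificate s.
Proof.
case=> p pP Ap; have [_ A_unit p_eq] := feasible_solution M_ge0 w_gt0 pP Ap.
have chi_s : (char_poly M).[s] != 0 by rewrite horner_char_poly -unitfE -unitmxE.
by split=> //; apply/(powset_cramerE chi_s); rewrite -p_eq.
Qed.

End SignCertificates.

Lemma root_prod_factor (R : idomainType) (I : finType) (P : pred I)
    (F : I -> {poly R}) i x :
  P i -> root (F i) x -> root (\prod_(j | P j) F j) x.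
Proof.
by move=> Pi /rootP Fx; apply/rootP; rewrite horner_prod (bigD1 i) //= Fx mul0r.
Qed.

Section CriticalPolynomial.
Variables (R : idomainType) (N K : nat) (C : 'M[R]_(N, K)) (phat : 'cV[R]_N).
Variables (M : 'M[R]_K) (w : 'cV[R]_K).

(* The product of chi and of all nonzero numerators: strictly between
   consecutive roots of crit_poly no sign condition can change. *)
Definition crit_poly : {poly R} :=
  char_poly M * \prod_(k | sol_num M w k 0 != 0) sol_num M w k 0 *
  \prod_(n | con_num C phat M w n != 0) con_num C phat M w n.

Lemma crit_poly_neq0 : crit_poly != 0.
Proof.
have prod_neq0 (I : finType) (F : I -> {poly R}) : \prod_(i | F i != 0) F i != 0.
  by apply/prodf_neq0.
by rewrite !mulf_neq0 ?(monic_neq0 (char_poly_monic M)) ?prod_neq0.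
Qed.

Lemma root_crit_char x : root (char_poly M) x -> root crit_poly x.
Proof. by move=> chi_x; rewrite !rootM chi_x. Qed.

Lemma root_crit_sol k x :
  sol_num M w k 0 != 0 -> root (sol_num M w k 0 * char_poly M) x -> root crit_poly x.
Proof.
move=> sol_neq0; rewrite rootM => /orP[sol_x|/root_crit_char//].
by rewrite !rootM (root_prod_factor (P := fun k => sol_num M w k 0 != 0)
  sol_neq0 sol_x) orbT.
Qed.

Lemma root_crit_con n x :
  con_num C phat M w n != 0 -> root (con_num C phat M w n * char_poly M) x ->
  root crit_poly x.
Proof.
move=> con_neq0; rewrite rootM => /orP[con_x|/root_crit_char//].
by rewrite rootM (root_prod_factor (P := fun n => con_num C phat M w n != 0)
  con_neq0 con_x) orbT.
Qed.

End CriticalPolynomial.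

Section LeastFeasibleLevel.
Variables (R : rcfType) (N K : nat) (C : 'M[R]_(N, K)) (phat : 'cV[R]_N).
Variables (M : 'M[R]_K) (w : 'cV[R]_K).
Hypotheses (M_ge0 : forall i j, 0 <= M i j) (w_gt0 : forall k, 0 < w k 0).
Hypotheses (C_ge0 : forall n k, 0 <= C n k) (phat_gt0 : forall n, 0 < phat n 0).
Hypothesis C_col : forall k, exists n, C n k = 1.

Local Notation feasible := (feasible C phat M w).
Local Notation crit := (crit_poly C phat M w).
Local Notation rootfree r s := (forall x, r < x <= s -> ~~ root crit x).

Lemma certificate_propagates r s u :
  rootfree r s -> sign_certificate C phat M w s -> r <= u <= s ->
  sign_certificate C phat M w u.
Proof.
move=> noroot [sol_s con_s] rus; split=> [k|n].
  have [->|sol_neq0] := eqVneq (sol_num M w k 0) 0; first by rewrite mul0r horner0.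
  apply: (rootfree_nonneg _ (sol_s k) rus) => x /noroot.
  by apply: contra; apply: root_crit_sol.
have [->|con_neq0] := eqVneq (con_num C phat M w n) 0; first by rewrite mul0r horner0.
apply: (rootfree_nonpos _ (con_s n) rus) => x /noroot.
by apply: contra; apply: root_crit_con.
Qed.

(* If every level in ]r, s] is feasible then rI - M is still invertible:
   the solutions stay bounded in P, so a solution at a level close enough
   to r is a positive vector x with (rI - M) x > 0. *)
Lemma unit_below r s :
  r < s -> (forall u, r < u <= s -> feasible u) -> r%:M - M \in unitmx.
Proof.
move=> rs feas_rs.
have [d d_gt0 d_le] := ex_pos_lower_bound (f := fun k => w k 0) w_gt0.
pose B := \sum_n phat n 0.
have B_ge0 : 0 <= B by apply: sumr_ge0 => n _; apply: ltW.
pose e := Num.min (s - r) (d / (B + 1)).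
have e_gt0 : 0 < e by rewrite lt_min subr_gt0 rs divr_gt0 // ltr_wpDl.
have eB_lt : e * B < d.
  apply: (@lt_le_trans _ _ (e * (B + 1))); first by rewrite ltr_pM2l // ltrDl.
  by rewrite -ler_pdivlMr ?ltr_wpDl // ge_min lexx orbT.
have [x xP Ax] : feasible (r + e).
  by apply: feas_rs; rewrite ltrDl e_gt0 -lerBrDl ge_min lexx.
have [x_gt0 _ _] := feasible_solution M_ge0 w_gt0 xP Ax.
apply: (Mmatrix_unit M_ge0 x_gt0) => k.
have Axk : (r + e) * x k 0 - \sum_j M k j * x j 0 = w k 0.
  by rewrite -scalar_sub_mulmxE Ax.
rewrite scalar_sub_mulmxE (_ : _ - _ = w k 0 - e * x k 0); last first.
  by rewrite -Axk mulrDl addrAC addrK.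
rewrite subr_gt0 (le_lt_trans _ (lt_le_trans eB_lt (d_le k))) //.
by rewrite ler_wpM2l ?(ltW e_gt0) // (powset_bounded C_ge0 phat_gt0 (C_col k) xP).
Qed.

Lemma feasible_closed_below r s :
  feasible s -> r < s -> rootfree r s -> feasible r.
Proof.
move=> feas_s rs noroot.
have [_ cert_s] := certificate_of_feasible M_ge0 w_gt0 feas_s.
have cert u : r <= u <= s -> sign_certificate C phat M w u.
  exact: certificate_propagates noroot cert_s.
have chi_neq0 u : r < u <= s -> (char_poly M).[u] != 0.
  by move=> /noroot; apply: contra; apply: root_crit_char.
have feas_rs u : r < u <= s -> feasible u.
  move=> rus; apply: feasible_of_certificate (chi_neq0 _ rus) (cert _ _).
  by case/andP: rus => /ltW -> ->.
apply: feasible_of_certificate; last by apply: cert; rewrite lexx ltW.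
by rewrite horner_char_poly -unitfE -unitmxE (unit_below rs feas_rs).
Qed.

(* Below every feasible level there is a feasible root of crit: the largest
   root below s (if there were none, the level -1 would be feasible). *)
Lemma feasible_root_below (k0 : 'I_K) s :
  feasible s -> exists r, [/\ feasible r, root crit r & r <= s].
Proof.
move=> feas_s; have [roots roots_l] := roots_in_seq (crit_poly_neq0 C phat M w).
have [crit_s|nroot_s] := boolP (root crit s); first by exists s.
have noroot_between r : (forall x, x < s -> root crit x -> x <= r) -> rootfree r s.
  move=> r_max x /andP[rx xs]; apply: contraNN nroot_s => crit_x.
  have [<-//|x_neq_s] := eqVneq x s.
  by move: (r_max x); rewrite lt_neqAle x_neq_s xs crit_x leNgt rx => /(_ isT isT).
have [[x0 x0_below]|nobelow] := classic (exists x, x < s /\ root crit x).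
  have [r [[rs crit_r] r_max]] := @ex_max_in_seq _ (fun x => x < s /\ root crit x)
    roots (fun x h => roots_l x h.2) (ex_intro _ x0 x0_below).
  exists r; split=> //; last exact: ltW.
  apply: (feasible_closed_below feas_s rs).
  by apply: noroot_between => x xs cx; apply: r_max.
have s_gt0 := feasible_gt0 M_ge0 w_gt0 k0 feas_s.
have feas_m1 : feasible (-1).
  apply: (feasible_closed_below feas_s); first by rewrite (lt_trans _ s_gt0) ?oppr_lt0.
  by apply: noroot_between => x xs cx; case: nobelow; exists x.
by have := feasible_gt0 M_ge0 w_gt0 k0 feas_m1; rewrite oppr_gt0 ltr10.
Qed.

Lemma exists_least_feasible (k0 : 'I_K) :
  exists s, feasible s /\ forall s', feasible s' -> s <= s'.
Proof.
have [roots roots_l] := roots_in_seq (crit_poly_neq0 C phat M w).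
have [s0 feas_s0] := feasible_exists M_ge0 w_gt0 C_ge0 phat_gt0.
have [r [feas_r crit_r _]] := feasible_root_below k0 feas_s0.
have [m [[feas_m _] m_min]] := @ex_min_in_seq _ (fun x => feasible x /\ root crit x)
  roots (fun x h => roots_l x h.2) (ex_intro _ r (conj feas_r crit_r)).
exists m; split=> // s' /(feasible_root_below k0)[r' [feas_r' crit_r' r's']].
exact: le_trans (m_min r' (conj feas_r' crit_r')) r's'.
Qed.

End LeastFeasibleLevel.

Lemma minval_le (R : realFieldType) n (f : 'I_n -> R) i : minval f <= f i.
Proof. by apply: ge_bigmin_seq => //; exact: mem_index_enum. Qed.

Lemma minval_const (R : realFieldType) n (f : 'I_n -> R) (i0 : 'I_n) c :
  (forall i, f i = c) -> minval f = c.
Proof.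
move=> f_c; apply/le_anti; rewrite -{1}(f_c i0) minval_le /=.
apply: le_bigmin => [|i _]; last by rewrite f_c.
by rewrite -(f_c i0); apply: le_bigmax_seq => //; exact: mem_index_enum.
Qed.

Section SIRBalancing.
Variables (R : realFieldType) (K : nat) (V : 'M[R]_K) (z : 'cV[R]_K).
Variable gamma : 'I_K -> R.
Hypotheses (V_ge0 : forall k l, 0 <= V k l) (z_gt0 : forall k, 0 < z k 0).
Hypothesis gamma_gt0 : forall k, 0 < gamma k.
Local Notation Gamma := (Gammamx gamma).

Lemma Gamma_mulmxE m (x : 'M[R]_(K, m)) k j : (Gamma *m x) k j = gamma k * x k j.
Proof. by rewrite mul_diag_mx !mxE. Qed.

Lemma Gamma_sub_mulmxE s (q : 'cV[R]_K) k :
  ((s%:M - Gamma *m V) *m q) k 0 = s * q k 0 - gamma k * (V *m q) k 0.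
Proof.
rewrite mulmxBl mul_scalar_mx -mulmxA [LHS]mxE [(s *: q) k 0]mxE.
by rewrite [(- (Gamma *m _)) k 0]mxE Gamma_mulmxE.
Qed.

(* Multiplying V by the positive diagonal Gamma keeps its zero pattern. *)
Lemma irreducible_Gamma : irreducible_mx V -> irreducible_mx (Gamma *m V).
Proof.
move=> Virr [T [T0 TT GV0]]; apply: Virr; exists T; split=> // k l kT lT.
by have /eqP := GV0 k l kT lT; rewrite Gamma_mulmxE mulf_eq0 gt_eqF //= => /eqP.
Qed.

Lemma interference_gt0 (q : 'cV[R]_K) k :
  (forall k, 0 <= q k 0) -> 0 < (V *m q) k 0 + z k 0.
Proof.
move=> q_ge0; rewrite ltr_wpDl // mxE sumr_ge0 // => j _.
exact: mulr_ge0.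
Qed.

Lemma SIR_ratio_geE (q : 'cV[R]_K) k c :
  (forall k, 0 <= q k 0) -> 0 < c ->
  (c <= SIR V z q k / gamma k) =
  ((Gamma *m z) k 0 <= ((c^-1%:M - Gamma *m V) *m q) k 0).
Proof.
move=> q_ge0 c_gt0; have D_gt0 := interference_gt0 k q_ge0.
rewrite Gamma_mulmxE Gamma_sub_mulmxE /SIR ler_pdivlMr // ler_pdivlMr //.
by rewrite lerBrDr -mulrDr [z k 0 + _]addrC ler_pdivlMl // mulrA.
Qed.

Lemma supersolution_of_balance (q : 'cV[R]_K) c :
  (forall k, 0 <= q k 0) -> 0 < c -> c <= balance_obj V z gamma q ->
  forall k, (Gamma *m z) k 0 <= ((c^-1%:M - Gamma *m V) *m q) k 0.
Proof.
move=> q_ge0 c_gt0 c_le k; rewrite -SIR_ratio_geE //.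
exact: le_trans c_le (minval_le _ k).
Qed.

Lemma balance_obj_solution (k0 : 'I_K) s (p : 'cV[R]_K) :
  0 < s -> (forall k, 0 <= p k 0) ->
  (s%:M - Gamma *m V) *m p = Gamma *m z -> balance_obj V z gamma p = s^-1.
Proof.
move=> s_gt0 p_ge0 Ap; apply: (minval_const k0) => k; rewrite /SIR.
have D_neq0 : (V *m p) k 0 + z k 0 != 0 by rewrite gt_eqF // interference_gt0.
have Apk : s * p k 0 - gamma k * (V *m p) k 0 = gamma k * z k 0.
  by rewrite -Gamma_sub_mulmxE Ap Gamma_mulmxE.
have -> : p k 0 = s^-1 * gamma k * ((V *m p) k 0 + z k 0).
  by rewrite -mulrA mulrDr -Apk addrC subrK mulrA mulVf ?gt_eqF // mul1r.
by rewrite mulfK // mulfK ?gt_eqF.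
Qed.

End SIRBalancing.

Unset Implicit Arguments.
Set Strict Implicit.

Theorem mainTheorem2 (R : rcfType) (K N : nat) (hK : (2 <= K)%N)
  (C : 'M[R]_(N, K)) (hC01 : forall n k, C n k = 0 \/ C n k = 1)
  (hCcol : forall k, exists n, C n k = 1)
  (phat : 'cV[R]_N) (hphat : forall n, 0 < phat n 0)
  (V : 'M[R]_K) (hVnn : forall k l, 0 <= V k l) (hVdiag : forall k, V k k = 0)
  (z : 'cV[R]_K) (hz : forall k, 0 < z k 0)
  (gamma : 'I_K -> R) (hgamma : forall k, 0 < gamma k)
  (hirr : irreducible_mx V) :
  exists pbar : 'cV[R]_K,
    (* pbar is a maximizer of the max-min SIR-balancing problem *)
    [/\ powset C phat pbar /\
          (forall p, powset C phat p ->
             balance_obj V z gamma p <= balance_obj V z gamma pbar),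
        (* it is the unique maximizer *)
        (forall p, powset C phat p ->
           (forall q, powset C phat q ->
              balance_obj V z gamma q <= balance_obj V z gamma p) ->
           p = pbar),
        (* pbar = pbar' = (1/t' I - Gamma V)^{-1} Gamma z, where t' is the
           largest t > 0 such that (1/t I - Gamma V) p = Gamma z for some p in P *)
        (exists t' : R,
           [/\ 0 < t',
               (exists p, powset C phat p /\
                  Amx V gamma t' *m p = Gammamx gamma *m z),
               (forall t, 0 < t ->
                  (exists p, powset C phat p /\
                     Amx V gamma t *m p = Gammamx gamma *m z) -> t <= t'),
               Amx V gamma t' \in unitmx &
               pbar = invmx (Amx V gamma t') *m (Gammamx gamma *m z)])
      & (* in particular pbar > 0 *)
        forall k, 0 < pbar k 0].
Proof.
pose M := Gammamx gamma *m V; pose w := Gammamx gamma *m z.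
have k0 : 'I_K := Ordinal (ltn_trans (ltnSn 0) hK).
have M_ge0 i j : 0 <= M i j.
  by rewrite /M Gamma_mulmxE; exact: mulr_ge0 (ltW (hgamma i)) (hVnn i j).
have w_gt0 k : 0 < w k 0 by rewrite /w Gamma_mulmxE mulr_gt0.
have C_ge0 n k : 0 <= C n k by case: (hC01 n k) => ->; rewrite ?ler01.
have [s [feas_s s_min]] := exists_least_feasible M_ge0 w_gt0 C_ge0 hphat hCcol k0.
have s_gt0 := feasible_gt0 M_ge0 w_gt0 k0 feas_s.
case: feas_s => p pP Ap; have [p_gt0 A_unit p_eq] := feasible_solution M_ge0 w_gt0 pP Ap.
have obj_p : balance_obj V z gamma p = s^-1.
  by apply: (balance_obj_solution hVnn hz hgamma k0 s_gt0) => // k; apply: ltW.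
have obj_le q : powset C phat q -> balance_obj V z gamma q <= s^-1.
  move=> qP; have [c_le0|c_gt0] := lerP (balance_obj V z gamma q) 0.
    by rewrite (le_trans c_le0) // ltW // invr_gt0.
  have /s_min := feasible_of_supersolution M_ge0 w_gt0 C_ge0 qP
    (supersolution_of_balance hVnn hz hgamma (proj1 qP) c_gt0 (lexx _)).
  by rewrite -[X in X <= _]invrK lef_pV2 ?posrE ?invr_gt0.
exists p; split=> [|q qP q_max||//].
- by split=> // q; rewrite obj_p; apply: obj_le.
- apply: (least_level_supersolution M_ge0 w_gt0 C_ge0 hphat
    (irreducible_Gamma hgamma hirr) s_min Ap pP qP).
  rewrite -[s]invrK; apply: (supersolution_of_balance hVnn hz hgamma (proj1 qP)).
    by rewrite invr_gt0.
  by rewrite -obj_p q_max.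
exists s^-1; rewrite /Amx invrK; split=> //; first by rewrite invr_gt0.
- by exists p.
- move=> t t_gt0 [q [qP Aq]]; have := s_min t^-1 (ex_intro2 _ _ q qP Aq).
  by rewrite -[X in X <= _]invrK lef_pV2 ?posrE ?invr_gt0.
Qed.
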